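(* Let $d\ge1$ and let $X_1,\dots,X_d$ be non-negative integrable random variables such that $\mathbb{P}(X_i>t,X_j>t)\le\mathbb{P}(X_i>t)\mathbb{P}(X_j>t)$ for all $i\neq j\in[d]$ and all $t>0$. Let $\tilde X_1,\dots,\tilde X_d$ be mutually independent with $\tilde X_i$ equal in distribution to $X_i$. Then $\mathbb{E}\max_{i\in[d]}X_i\ge\frac12\mathbb{E}\max_{i\in[d]}\tilde X_i$.
   Context: $[d]=\{1,\dots,d\}$. *)

From HB Require Import structures.
From mathcomp Require Import all_boot all_order all_algebra.
From mathcomp Require Import all_classical all_reals all_analysis.
Set Implicit Arguments. Unset Strict Implicit. Unset Printing Implicit Defensive.
Import Order.TTheory GRing.Theory Num.Theory.
Local Open Scope classical_set_scope.
Local Open Scope ring_scope.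

Definition mutually_independent (dT : measure_display) (T : measurableType dT)
  (R : realType) (P : probability T R) (n : nat) (Y : 'I_n -> T -> R) : Prop :=
  forall (S : {set 'I_n}) (B : 'I_n -> set R),
    (forall i, measurable (B i)) ->
    P (\bigcap_(i in [set i | i \in S]) (Y i @^-1` B i)) =
    (\prod_(i in S) P (Y i @^-1` B i))%E.

(* pointwise maximum of the family (the X_i are non-negative, so 0 is a
   harmless initial value; d >= 1 anyway) *)
Definition maxRV (T : Type) (R : realType) (n : nat) (X : 'I_n -> T -> R) : T -> R :=
  fun x => \big[Num.max/0]_(i < n) X i x.

From HB Require Import structures.
From mathcomp Require Import all_boot all_order all_algebra.
From mathcomp Require Import all_classical all_reals all_analysis.
From mathcomp Require Import finmap measurable_realfun ring lra.
Set Implicit Arguments. Unset Strict Implicit. Unset Printing Implicit Defensive.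
Import Order.TTheory GRing.Theory Num.Theory.
Local Open Scope classical_set_scope.
Local Open Scope ring_scope.

(* By the tail formula E M = int_0^oo P(M > t) dt for a nonnegative M, it
   suffices to compare, for every t > 0, the events A_i = {X_i > t} and
   B_i = {Xt_i > t}, which have the same probabilities p_i; let s = sum_i p_i.
   The union bound gives P(U_i B_i) <= min(1, s).  For the A_i, put
   N = sum_i 1_{A_i}: for every a, 2aN <= 1_{U_i A_i} + a^2 N^2 pointwise,
   because N = 0 off the union and (1 - aN)^2 >= 0 on it.  Taking
   expectations, E N = s and E N^2 = sum_{i,j} P(A_i n A_j) <= s + s^2 by
   negative correlation; a = 1/(1+s) then yields
   P(U_i A_i) >= s/(1+s) >= min(1, s)/2. *)

Lemma fsbig_setT (R : Type) (idx : R) (op : Monoid.com_law idx) (I : finType)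
    (F : I -> R) :
  \big[op/idx]_(i \in [set: I]) F i = \big[op/idx]_i F i.
Proof.
rewrite (fsbigTE [fset i | i in I]%fset) ?big_imfset ?big_enum //.
by move=> i; rewrite in_imfset.
Qed.

Lemma sqr_sum_indic (T : Type) (R : realType) (I : finType) (A : I -> set T) x :
  (\sum_i \1_(A i) x) ^+ 2 = \sum_i \sum_j \1_(A i `&` A j) x :> R.
Proof.
rewrite expr2 mulr_suml; apply: eq_bigr => i _.
by rewrite mulr_sumr; apply: eq_bigr => j _; rewrite indicI.
Qed.

Lemma indic_fin_bigcup_ge (T : Type) (R : realType) (I : finType)
    (A : I -> set T) (a : R) x :
  2 * a * (\sum_i \1_(A i) x) <=
  \1_(\bigcup_i A i) x + a ^+ 2 * (\sum_i \1_(A i) x) ^+ 2.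
Proof.
set N := \sum_i _; have [[i _ Aix]|notU] := pselect ((\bigcup_i A i) x).
  rewrite indicE mem_set; last by exists i.
  by have := sqr_ge0 (1 - a * N); rewrite /= sqrrB expr1n exprMn; lra.
have -> : N = 0.
  by apply: big1 => j _; rewrite indicE memNset // => Ajx; apply: notU; exists j.
by rewrite indicE memNset // !(mulr0, expr0n) addr0.
Qed.

Lemma half_le_div1D (R : realFieldType) (s v : R) :
  0 <= s -> v <= 1 -> v <= s -> v / 2 <= s / (1 + s).
Proof.
move=> s0 v1 vs; have s1 : 0 < 1 + s by rewrite ltr_pwDl.
have -> : s / (1 + s) = v / 2 + (2 * s - v * (1 + s)) / (2 * (1 + s)).
  by field; rewrite lt0r_neq0.
rewrite lerDl divr_ge0 ?mulr_ge0 //; last exact: ltW.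
by have [s_le1|s_gt1] := leP s 1; nra.
Qed.

Section finite_unions.
Context d (T : measurableType d) (R : realType) (mu : {measure set T -> \bar R}).

Lemma measurable_fin_bigcup (I : finType) (A : I -> set T) :
  (forall i, measurable (A i)) -> measurable (\bigcup_i A i).
Proof. by move=> mA; apply: fin_bigcup_measurable => //; exact: finite_finset. Qed.

Lemma measure_fin_bigcup_le (I : finType) (A : I -> set T) :
  (forall i, measurable (A i)) -> (mu (\bigcup_i A i) <= \sum_i mu (A i))%E.
Proof.
move=> mA; rewrite -fsbig_setT; apply: content_sub_fsum => //.
- exact: finite_finset.
- exact: measurable_fin_bigcup.
Qed.

Lemma measurable_sum_indic (I : finType) (A : I -> set T) :
  (forall i, measurable (A i)) ->
  measurable_fun [set: T] (fun x => \sum_i \1_(A i) x : R).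
Proof. by move=> mA; apply: measurable_sum => i; exact: measurable_indic. Qed.

Lemma integral_sum_indic (I : finType) (A : I -> set T) :
  (forall i, measurable (A i)) ->
  (\int[mu]_x (\sum_i \1_(A i) x)%:E = \sum_i mu (A i))%E.
Proof.
move=> mA; under eq_integral do rewrite -sumEFin.
rewrite ge0_integral_sum //.
- by apply: eq_bigr => i _; rewrite integral_indic ?setIT.
- by move=> i; apply/measurable_EFinP; exact: measurable_indic.
Qed.

Lemma measure_fin_bigcup_ge (I : finType) (A : I -> set T) (a : R) :
  (forall i, measurable (A i)) -> 0 <= a ->
  ((2 * a)%:E * \sum_i mu (A i) <=
   mu (\bigcup_i A i) + (a ^+ 2)%:E * \sum_i \sum_j mu (A i `&` A j))%E.
Proof.
move=> mA a0.
have mAI (p : I * I) : measurable (A p.1 `&` A p.2) by exact: measurableI.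
have mU := measurable_fin_bigcup mA.
have mN := measurable_sum_indic mA.
have mN2 : measurable_fun [set: T] (fun x => (\sum_i \1_(A i) x) ^+ 2 : R).
  exact: measurable_funX.
have N0 x : 0 <= \sum_i \1_(A i) x :> R.
  by apply: sumr_ge0 => i _; rewrite indicE; case: (_ \in _).
rewrite pair_bigA -integral_sum_indic // -integral_sum_indic //.
rewrite -[\bigcup_i A i]setIT -integral_indic //.
under [X in (_ <= _ + _ * X)%E]eq_integral => x _
  do rewrite -(pair_bigA _ (fun i j => \1_(A i `&` A j) x)) -sqr_sum_indic.
rewrite -!ge0_integralZl_EFin ?mulr_ge0 ?sqr_ge0 //; last 4 first.
- by move=> x _; rewrite lee_fin sqr_ge0.
- exact/measurable_EFinP.
- by move=> x _; rewrite lee_fin.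
- exact/measurable_EFinP.
rewrite -ge0_integralD //; last 3 first.
- exact/measurable_EFinP/measurable_indic.
- by move=> x _; rewrite -EFinM lee_fin mulr_ge0 ?sqr_ge0.
- by apply: measurable_funeM; exact/measurable_EFinP.
apply: ge0_le_integral => //.
- by move=> x _; rewrite -EFinM lee_fin mulr_ge0 ?mulr_ge0.
- by apply: measurable_funeM; exact/measurable_EFinP.
- apply: emeasurable_funD; first exact/measurable_EFinP/measurable_indic.
  by apply: measurable_funeM; exact/measurable_EFinP.
by move=> x _; rewrite -!EFinM -EFinD lee_fin indic_fin_bigcup_ge.
Qed.

End finite_unions.

Lemma fine_probabilityE d (T : measurableType d) (R : realType)
    (P : probability T R) (A : set T) :
  measurable A -> P A = (fine (P A))%:E.
Proof. by move=> mA; rewrite fineK ?fin_num_measure. Qed.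

Section negatively_correlated_events.
Context d (T : measurableType d) (R : realType) (P : probability T R).
Context (I : finType) (A : I -> set T) (mA : forall i, measurable (A i)).
Hypothesis negcorr :
  forall i j, i != j -> (P (A i `&` A j) <= P (A i) * P (A j))%E.

Let s := \sum_i fine (P (A i)).

Lemma neg_corr_sum_probI_le :
  \sum_i \sum_j fine (P (A i `&` A j)) <= s + s ^+ 2.
Proof.
rewrite expr2 mulr_suml -big_split /=; apply: ler_sum => i _.
rewrite (bigD1 i) //= setIid mulr_sumr [in leRHS](bigD1 i) //= lerD2l.
rewrite ler_wpDl ?mulr_ge0 ?fine_ge0 //; apply: ler_sum => j ji.
have /negcorr : i != j by rewrite eq_sym.
rewrite (fine_probabilityE _ (measurableI _ _ (mA i) (mA j))).
by rewrite (fine_probabilityE _ (mA i)) (fine_probabilityE _ (mA j)) -EFinM lee_fin.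
Qed.

Lemma neg_corr_fin_bigcup_ge : s / (1 + s) <= fine (P (\bigcup_i A i)).
Proof.
have s0 : 0 <= s by apply: sumr_ge0 => i _; exact: fine_ge0.
have s1 : 1 + s != 0 by rewrite lt0r_neq0 // ltr_pwDl.
have a0 : 0 <= (1 + s)^-1 by rewrite invr_ge0 addr_ge0.
have mU := measurable_fin_bigcup mA.
have sE : (\sum_i P (A i) = s%:E)%E.
  by rewrite EFin_sum_fine // => i _; rewrite fin_num_measure.
have QE : (\sum_i \sum_j P (A i `&` A j) =
           (\sum_i \sum_j fine (P (A i `&` A j)))%:E)%E.
  rewrite -sumEFin; apply: eq_bigr => i _.
  by rewrite EFin_sum_fine // => j _; rewrite fin_num_measure //; exact: measurableI.
have := measure_fin_bigcup_ge P mA a0; rewrite sE QE => moment.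
rewrite -[X in (_ <= X + _)%E]fineK ?fin_num_measure // in moment.
rewrite -!EFinM -EFinD lee_fin in moment.
have := ler_wpM2l (exprn_ge0 2 a0) neg_corr_sum_probI_le.
have -> : (1 + s)^-1 ^+ 2 * (s + s ^+ 2) = s / (1 + s) by field.
lra.
Qed.

End negatively_correlated_events.

Lemma neg_corr_union_ge_half d (T : measurableType d) d' (T' : measurableType d')
    (R : realType) (P : probability T R) (P' : probability T' R) (I : finType)
    (A : I -> set T) (B : I -> set T') :
  (forall i, measurable (A i)) -> (forall i, measurable (B i)) ->
  (forall i, P (A i) = P' (B i)) ->
  (forall i j, i != j -> (P (A i `&` A j) <= P (A i) * P (A j))%E) ->
  ((2^-1)%:E * P' (\bigcup_i B i) <= P (\bigcup_i A i))%E.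
Proof.
move=> mA mB AB negcorr.
have mUA := measurable_fin_bigcup mA; have mUB := measurable_fin_bigcup mB.
rewrite (fine_probabilityE P' mUB) (fine_probabilityE P mUA) -EFinM lee_fin mulrC.
apply: le_trans (neg_corr_fin_bigcup_ge mA negcorr); apply: half_le_div1D.
- by apply: sumr_ge0 => i _; exact: fine_ge0.
- by rewrite -lee_fin -fine_probabilityE ?probability_le1.
rewrite -lee_fin -fine_probabilityE // EFin_sum_fine => [|i _]; last first.
  exact: fin_num_measure.
apply: le_trans (measure_fin_bigcup_le P' mB) _.
by apply: lee_sum => i _; rewrite AB.
Qed.

Section maximum_of_random_variables.
Context d (T : measurableType d) (R : realType) (n : nat).

Lemma maxRV_ge0 (Y : 'I_n -> T -> R) x : 0 <= maxRV Y x.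
Proof. exact: bigmax_ge_id. Qed.

Lemma maxRV_gt (Y : 'I_n -> T -> R) t : 0 <= t ->
  [set x | t < maxRV Y x] = \bigcup_i [set x | t < Y i x].
Proof.
move=> t0; apply/seteqP; split=> x /=.
- by case/bigmax_gtP => [|[i _ ?]]; [rewrite ltNge t0 | exists i].
- by case=> i _ ?; apply/bigmax_gtP; right; exists i.
Qed.

Lemma measurable_maxRV (Y : 'I_n -> T -> R) :
  (forall i, measurable_fun [set: T] (Y i)) -> measurable_fun [set: T] (maxRV Y).
Proof.
rewrite /maxRV; elim: n Y => [|m IH] Y mY.
  by under eq_fun do rewrite big_ord0; exact: measurable_cst.
under eq_fun do rewrite big_ord_recl.
by apply: measurable_maxr => //; apply: IH.
Qed.

Definition max_RV (P : probability T R) (Y : 'I_n -> {RV P >-> R}) : {RV P >-> R} :=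
  mfun_Sub (mem_set (measurable_maxRV (fun i => measurable_funPT (Y i)))).

Lemma ccdf_max_RV (P : probability T R) (Y : 'I_n -> {RV P >-> R}) t : 0 <= t ->
  ccdf (max_RV Y) t = P (\bigcup_i [set x | t < Y i x]).
Proof.
by move=> t0; rewrite /ccdf /distribution /pushforward preimage_itvoy maxRV_gt.
Qed.

End maximum_of_random_variables.

Lemma ge0_le_expectation_ccdf d (T : measurableType d) d' (T' : measurableType d')
    (R : realType) (P : probability T R) (P' : probability T' R)
    (Y : {RV P >-> R}) (Z : {RV P' >-> R}) (c : R) :
  0 <= c -> (forall x, 0 <= Y x) -> (forall x, 0 <= Z x) ->
  (forall t, 0 < t -> (c%:E * ccdf Y t <= ccdf Z t)%E) ->
  (c%:E * 'E_P[Y] <= 'E_P'[Z])%E.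
Proof.
move=> c0 Y0 Z0 YZ; rewrite !ge0_expectation_ccdf //.
have mY D : measurable_fun D (ccdf Y) by exact: measurable_funS (ccdf_measurable Y).
have mZ D : measurable_fun D (ccdf Z) by exact: measurable_funS (ccdf_measurable Z).
have mD0 : measurable (`[0, +oo[%classic `\ (0 : R)) by apply: measurableD.
rewrite -ge0_integralZl_EFin //; last exact: mY.
rewrite -[leLHS](integral_setD1 (r := 0)) //; last exact: measurable_funeM (mY _).
rewrite -[leRHS](integral_setD1 (r := 0)) //.
apply: ge0_le_integral => //.
- by move=> t _; rewrite mule_ge0 ?lee_fin.
- exact: measurable_funeM (mY _).
- exact: mZ.
move=> t [/=]; rewrite in_itv /= andbT => t_ge0 t_neq0; apply: YZ.
by rewrite lt_neqAle eq_sym t_ge0 andbT; apply/eqP.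
Qed.

Unset Implicit Arguments.
Theorem corollary13 (R : realType)
  (dT : measure_display) (T : measurableType dT) (P : probability T R)
  (dT' : measure_display) (T' : measurableType dT') (P' : probability T' R)
  (d : nat) (hd : (1 <= d)%N)
  (X : 'I_d -> {RV P >-> R}) (Xt : 'I_d -> {RV P' >-> R})
  (X_ge0 : forall i x, 0 <= X i x)
  (X_int : forall i, P.-integrable setT (EFin \o X i))
  (negcorr : forall i j : 'I_d, i != j -> forall t : R, 0 < t ->
     (P ([set x | (t < X i x)%R] `&` [set x | (t < X j x)%R])
      <= P [set x | (t < X i x)%R] * P [set x | (t < X j x)%R])%E)
  (Xt_indep : mutually_independent P' (fun i => (Xt i : T' -> R)))
  (Xt_law : forall i (B : set R), measurable B ->
     distribution P (X i) B = distribution P' (Xt i) B) :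
  ((2^-1)%:E * 'E_P'[maxRV (fun i => (Xt i : T' -> R))]
   <= 'E_P[maxRV (fun i => (X i : T -> R))])%E.
Proof.
have measurable_gt dd (TT : measurableType dd) (Q : probability TT R)
    (Y : {RV Q >-> R}) t : measurable [set x | t < Y x].
  by rewrite -preimage_itvoy; exact: measurable_funPTI.
apply: (ge0_le_expectation_ccdf (Y := max_RV Xt) (Z := max_RV X)) => //.
- exact: maxRV_ge0.
- exact: maxRV_ge0.
move=> t t0; rewrite !ccdf_max_RV ?(ltW t0) //.
apply: neg_corr_union_ge_half => [i|i|i|i j ij].
- exact: measurable_gt.
- exact: measurable_gt.
- have := Xt_law i _ (measurable_itv `]t, +oo[).
  by rewrite /distribution /pushforward !preimage_itvoy.
- exact: negcorr.
Qed.
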